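(* For $q\in\{1,2\}$ and all $M\in\mathbb{R}^{n\times n}$, $$\|\mathcal{U}_b(M)\|_{b,2^q}\le2^{q-1}\|M\|_{b,2^q}.$$
   Context: Fix a block structure $0=n_0<n_1<\dots<n_m=n$; block $(i,j)$, $0\le i,j\le m-1$, consists of rows $n_i+1..n_{i+1}$ and columns $n_j+1..n_{j+1}$. The block upper triangular truncation $\mathcal{U}_b(M)$ has blocks $\mathcal{U}_b(M)(i,j)=M(i,j)$ for $i\le j$ and $0$ for $i>j$. $\mathcal{D}_b\subset\mathbb{R}^{n\times m}$ is the set of $X$ with $X_{ij}=0$ whenever $i\notin[n_{j-1}+1,n_j]$, and $\|A\|_{b,p}:=\sup\{\|AX\|_{S_p}:X\in\mathcal{D}_b,\ \|X\|_{S_\infty}\le1\}$ with $\|\cdot\|_{S_p}$ the Schatten $p$-norm. *)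

From HB Require Import structures.
From mathcomp Require Import all_boot all_order all_algebra.
From mathcomp Require Import boolp classical_sets reals.
Set Implicit Arguments. Unset Strict Implicit. Unset Printing Implicit Defensive.
Import Order.TTheory GRing.Theory Num.Theory.
Local Open Scope ring_scope.
Local Open Scope classical_set_scope.

(* Block i (0-based, i < m) consists of the 0-based indices r with
   nb i <= r < nb i.+1 (i.e. the 1-based indices nb i + 1 .. nb i.+1). *)
Definition block_structure (n m : nat) (nb : nat -> nat) : Prop :=
  nb 0%N = 0%N /\ (forall i, (i < m)%N -> (nb i < nb i.+1)%N) /\ nb m = n.

(* 0-based block index of a 0-based row/column index r. *)
Definition blk (m : nat) (nb : nat -> nat) (r : nat) : nat :=
  count (fun k => nb k.+1 <= r)%N (iota 0 m).

Definition Ub {R : pzRingType} (n m : nat) (nb : nat -> nat) (M : 'M[R]_n)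
  : 'M[R]_n :=
  \matrix_(r < n, c < n) if (blk m nb r <= blk m nb c)%N then M r c else 0.

Definition inDb {R : pzRingType} (n m : nat) (nb : nat -> nat)
  (X : 'M[R]_(n, m)) : Prop :=
  forall (r : 'I_n) (j : 'I_m), ~~ ((nb j <= r) && (r < nb j.+1))%N -> X r j = 0.

Definition opnorm_le1 {R : realType} (n m : nat) (X : 'M[R]_(n, m)) : Prop :=
  forall v : 'cV[R]_m,
    \sum_(i < n) ((X *m v) i 0) ^+ 2 <= \sum_(j < m) (v j 0) ^+ 2.

(* Schatten p-norm for p = 2^q (q >= 1):
   ||A||_{S_p} = (tr ((A^T A)^(p/2)))^(1/p), the p/2 = 2^(q-1) power being
   a matrix power, and the 1/2^q-th root computed as q iterated square roots. *)
Definition schatten_pow2 {R : realType} (n m : nat) (q : nat)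
  (A : 'M[R]_(n, m)) : R :=
  iter q Num.sqrt (\tr ((A^T *m A) ^+ (2 ^ q.-1)%N)).

Definition bnorm {R : realType} (n m : nat) (nb : nat -> nat) (q : nat)
  (A : 'M[R]_n) : R :=
  sup [set y : R | exists X : 'M[R]_(n, m),
        inDb nb X /\ opnorm_le1 X /\ y = schatten_pow2 q (A *m X)].

From HB Require Import structures.
From mathcomp Require Import all_boot all_order all_algebra.
From mathcomp Require Import boolp classical_sets reals.
From mathcomp Require Import ring lra.
Set Implicit Arguments. Unset Strict Implicit. Unset Printing Implicit Defensive.
Import Order.TTheory GRing.Theory Num.Theory.
Local Open Scope ring_scope.

(* With Z := M X and A := U_b(M) X for X in D_b, the entry A r j is Z r j when
   block(r) <= j and 0 otherwise.  For p = 2 the Frobenius norm can only drop.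
   For p = 4, ||A||_4^4 = ||A^T A||_F^2, and (A^T A) j k = (Z^T A) j k for
   k <= j, so by symmetry ||A^T A||_F^2 <= 2 ||Z^T A||_F^2.  Cauchy-Schwarz for
   the trace inner product gives ||Z^T A||_F^2 = <Z Z^T, A A^T>
   <= ||Z^T Z||_F ||A^T A||_F, whence ||A||_4^4 <= 4 ||Z||_4^4.  Taking the
   supremum over X gives the theorem. *)

Section Frobenius.
Variable R : realFieldType.

Lemma cauchy_schwarz (I : finType) (a b : I -> R) :
  (\sum_i a i * b i) ^+ 2 <= (\sum_i a i ^+ 2) * (\sum_i b i ^+ 2).
Proof.
set A := \sum_i a i ^+ 2; set B := \sum_i a i * b i; set C := \sum_i b i ^+ 2.
have A0 : 0 <= A by apply: sumr_ge0 => i _; exact: sqr_ge0.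
have [A_eq0|A_neq0] := eqVneq A 0.
  have a0 i : a i = 0.
    apply/eqP; rewrite -sqrf_eq0; apply/eqP.
    by apply: (psumr_eq0P (fun i _ => sqr_ge0 (a i)) A_eq0).
  by rewrite /B big1 ?expr0n ?A_eq0 ?mul0r // => i _; rewrite a0 mul0r.
have discr t : 0 <= t ^+ 2 * A - 2 * t * B + C.
  have -> : t ^+ 2 * A - 2 * t * B + C = \sum_i (t * a i - b i) ^+ 2.
    rewrite /A /B /C !mulr_sumr -sumrN -!big_split /=.
    by apply: eq_bigr => i _; ring.
  by apply: sumr_ge0 => i _; exact: sqr_ge0.
have := discr (B / A).
have -> : (B / A) ^+ 2 * A - 2 * (B / A) * B + C = C - B ^+ 2 / A by field.
by rewrite subr_ge0 ler_pdivrMr ?lt_def ?A_neq0 // mulrC.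
Qed.

Definition frob2 m n (A : 'M[R]_(m, n)) : R := \sum_i \sum_j A i j ^+ 2.

Lemma frob2_ge0 m n (A : 'M[R]_(m, n)) : 0 <= frob2 A.
Proof. by apply: sumr_ge0 => i _; apply: sumr_ge0 => j _; exact: sqr_ge0. Qed.

Lemma frob2_trmx m n (A : 'M[R]_(m, n)) : frob2 A^T = frob2 A.
Proof.
by rewrite /frob2 exchange_big; apply: eq_bigr => j _; apply: eq_bigr => i _; rewrite mxE.
Qed.

Lemma mxtrace_gram m n (A : 'M[R]_(m, n)) : \tr (A^T *m A) = frob2 A.
Proof.
rewrite -frob2_trmx /mxtrace; apply: eq_bigr => j _; rewrite mxE.
by apply: eq_bigr => i _; rewrite !mxE expr2.
Qed.

Lemma mxtrace_gram_sqr m n (A : 'M[R]_(m, n)) :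
  \tr ((A^T *m A) ^+ 2) = frob2 (A^T *m A).
Proof.
have gram_sym : (A^T *m A)^T = A^T *m A by rewrite trmx_mul trmxK.
by rewrite expr2 -mulmxE -{1}gram_sym mxtrace_gram.
Qed.

Lemma frob2_mulmx_le m n p (A : 'M[R]_(m, n)) (B : 'M[R]_(n, p)) :
  frob2 (A *m B) <= frob2 A * frob2 B.
Proof.
rewrite -(frob2_trmx B) /frob2 mulr_suml; apply: ler_sum => i _.
rewrite mulr_sumr; apply: ler_sum => j _.
by rewrite mxE; under [X in _ <= _ * X]eq_bigr do rewrite mxE; exact: cauchy_schwarz.
Qed.

Lemma frob2_trmx_mulmx m n p (A : 'M[R]_(m, n)) (B : 'M[R]_(m, p)) :
  frob2 (A^T *m B) = \sum_r \sum_s (A *m A^T) r s * (B *m B^T) r s.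
Proof.
transitivity (\sum_j \sum_k \sum_r \sum_s (A r j * A s j) * (B r k * B s k)).
  apply: eq_bigr => j _; apply: eq_bigr => k _.
  rewrite mxE expr2 mulr_suml; apply: eq_bigr => r _; rewrite mulr_sumr.
  by apply: eq_bigr => s _; rewrite !mxE; ring.
under eq_bigr do rewrite exchange_big.
rewrite exchange_big; apply: eq_bigr => r _.
under eq_bigr do rewrite exchange_big.
rewrite exchange_big; apply: eq_bigr => s _.
rewrite !mxE mulr_suml; apply: eq_bigr => j _; rewrite mulr_sumr.
by apply: eq_bigr => k _; rewrite !mxE.
Qed.

Lemma frob2_gram_trmx m n (A : 'M[R]_(m, n)) : frob2 (A^T *m A) = frob2 (A *m A^T).
Proof. by rewrite frob2_trmx_mulmx; do 2 (apply: eq_bigr => ? _); rewrite expr2. Qed.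

Lemma frob2_trmx_mulmx_sqr_le m n p (A : 'M[R]_(m, n)) (B : 'M[R]_(m, p)) :
  frob2 (A^T *m B) ^+ 2 <= frob2 (A^T *m A) * frob2 (B^T *m B).
Proof.
rewrite frob2_trmx_mulmx !frob2_gram_trmx /frob2 !pair_big /=.
exact: (cauchy_schwarz (fun rs => (A *m A^T) rs.1 rs.2) (fun rs => (B *m B^T) rs.1 rs.2)).
Qed.

End Frobenius.

Section RowTruncation.
Variables (R : realFieldType) (n m : nat) (f : 'I_n -> nat) (Z A : 'M[R]_(n, m)).
Hypothesis A_trunc : forall r j, A r j = if (f r <= j)%N then Z r j else 0.

Lemma frob2_trunc_le : frob2 A <= frob2 Z.
Proof.
apply: ler_sum => r _; apply: ler_sum => j _; rewrite A_trunc.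
by case: ifP; rewrite ?expr0n ?sqr_ge0.
Qed.

Lemma gram_trunc_lower (j k : 'I_m) : (k <= j)%N -> (A^T *m A) j k = (Z^T *m A) j k.
Proof.
move=> le_kj; rewrite !mxE; apply: eq_bigr => r _; rewrite !mxE !A_trunc.
by case: (leqP (f r) k) => [/leq_trans->|]; rewrite ?mulr0.
Qed.

Lemma frob2_gram_trunc_le2 : frob2 (A^T *m A) <= 2 * frob2 (Z^T *m A).
Proof.
set W := Z^T *m A.
have -> : 2 * frob2 W = frob2 W + frob2 W^T by rewrite frob2_trmx mulr_natl.
rewrite /frob2 -big_split; apply: ler_sum => j _; rewrite -big_split.
apply: ler_sum => k _; rewrite [W^T j k]mxE.
have [le_kj|lt_jk] := leqP k j.
  by rewrite gram_trunc_lower // lerDl sqr_ge0.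
have gram_sym : (A^T *m A)^T = A^T *m A by rewrite trmx_mul trmxK.
have -> : (A^T *m A) j k = (A^T *m A) k j by rewrite -{1}gram_sym mxE.
rewrite gram_trunc_lower; last exact: ltnW.
by rewrite lerDr sqr_ge0.
Qed.

Lemma frob2_gram_trunc_le : frob2 (A^T *m A) <= 4 * frob2 (Z^T *m Z).
Proof.
set a := frob2 (A^T *m A); set z := frob2 (Z^T *m Z); set w := frob2 (Z^T *m A).
have a_ge0 : 0 <= a := frob2_ge0 _.
have a_sqr : a * a <= (4 * z) * a.
  apply: le_trans (_ : (2 * w) * (2 * w) <= _).
    by apply: ler_pM => //; exact: frob2_gram_trunc_le2.
  have := frob2_trmx_mulmx_sqr_le Z A; rewrite -/w -/z -/a => cs.
  by rewrite -mulrA; lra.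
have [->|a_gt0] := eqVneq a 0; first by rewrite mulr_ge0 ?frob2_ge0.
by rewrite -(ler_pM2r (_ : 0 < a)) // lt_def a_gt0.
Qed.

End RowTruncation.

Section BlockStructure.
Variables (n m : nat) (nb : nat -> nat).
Hypothesis hb : block_structure n m nb.

Lemma block_bound_le a b : (a <= b <= m)%N -> (nb a <= nb b)%N.
Proof.
case: hb => _ [nb_lt _] /andP[le_ab]; rewrite -(subnKC le_ab).
elim: (b - a)%N => [|d IH]; rewrite ?addn0 // addnS => lt_m.
exact: leq_trans (IH (ltnW lt_m)) (ltnW (nb_lt _ lt_m)).
Qed.

Lemma blkE (j c : nat) : (j < m)%N -> (nb j <= c < nb j.+1)%N -> blk m nb c = j.
Proof.
move=> lt_jm /andP[le_c lt_c]; rewrite /blk.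
have count_lt : {in iota 0 m, (fun k => nb k.+1 <= c)%N =1 (fun k => k < j)%N}.
  move=> k; rewrite mem_iota add0n /= => lt_km.
  case: (ltnP k j) => [lt_kj|le_jk].
    by apply: leq_trans le_c; rewrite block_bound_le // lt_kj ltnW.
  by apply/negbTE; rewrite -ltnNge (leq_trans lt_c) // block_bound_le // ltnS le_jk.
rewrite (eq_in_count count_lt) -(subnKC (ltnW lt_jm)) iotaD count_cat add0n.
rewrite (@eq_in_count _ _ predT) => [|k]; last by rewrite mem_iota.
rewrite count_predT size_iota (@eq_in_count _ _ pred0) ?count_pred0 ?addn0 //.
by move=> k; rewrite mem_iota /= => /andP[le_jk _]; rewrite ltnNge le_jk.
Qed.

Lemma Ub_mulmx (R : pzRingType) (M : 'M[R]_n) (X : 'M[R]_(n, m)) :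
  inDb nb X -> forall r j,
  (Ub m nb M *m X) r j = if (blk m nb r <= j)%N then (M *m X) r j else 0.
Proof.
move=> X_Db r j; rewrite !mxE.
have term c : (Ub m nb M) r c * X c j = if (blk m nb r <= j)%N then M r c * X c j else 0.
  rewrite mxE; have [c_in|c_out] := boolP (nb j <= c < nb j.+1)%N.
    by rewrite (blkE (ltn_ord j) c_in); case: ifP; rewrite ?mul0r.
  by rewrite X_Db // !mulr0; case: ifP.
under eq_bigr do rewrite term.
by case: ifP => _; last exact: big1.
Qed.

End BlockStructure.

Section Schatten.
Variable R : realType.

Lemma schatten_pow2_1 n m (Y : 'M[R]_(n, m)) : schatten_pow2 1 Y = Num.sqrt (frob2 Y).
Proof. by rewrite /schatten_pow2 /= expn0 expr1 mxtrace_gram. Qed.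

Lemma schatten_pow2_2 n m (Y : 'M[R]_(n, m)) :
  schatten_pow2 2 Y = Num.sqrt (Num.sqrt (frob2 (Y^T *m Y))).
Proof. by rewrite /schatten_pow2 /= expn1 mxtrace_gram_sqr. Qed.

Lemma schatten_pow2_le_frob q n m (Y : 'M[R]_(n, m)) :
  (1 <= q <= 2)%N -> schatten_pow2 q Y <= Num.sqrt (frob2 Y).
Proof.
case: q => [|[|[|q]]] // _; rewrite ?schatten_pow2_1 // schatten_pow2_2.
apply: ler_wsqrtr; apply: le_trans (ler_wsqrtr (frob2_mulmx_le _ _)) _.
by rewrite frob2_trmx -expr2 sqrtr_sqr ger0_norm ?frob2_ge0.
Qed.

Lemma opnorm_le1_frob2 n m (X : 'M[R]_(n, m)) : opnorm_le1 X -> frob2 X <= m%:R.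
Proof.
move=> X_le1; rewrite -frob2_trmx -[m in m%:R]card_ord -sum1_card natr_sum.
apply: ler_sum => j _; have := X_le1 (delta_mx j 0).
have -> : \sum_k (delta_mx j 0 : 'cV[R]_m) k 0 ^+ 2 = 1.
  rewrite (bigD1 j) //= big1 ?mxE ?eqxx ?expr1n ?addr0 // => k k_neq_j.
  by rewrite mxE (negbTE k_neq_j) expr0n.
apply: le_trans; apply: ler_sum => i _.
by rewrite -colE !mxE.
Qed.

Lemma schatten_pow2_Ub_mulmx_le n m nb q (M : 'M[R]_n) (X : 'M[R]_(n, m)) :
  block_structure n m nb -> (1 <= q <= 2)%N -> inDb nb X ->
  schatten_pow2 q (Ub m nb M *m X) <= (2 ^ q.-1)%N%:R * schatten_pow2 q (M *m X).
Proof.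
move=> hb + X_Db; have trunc := Ub_mulmx hb M X_Db.
case: q => [|[|[|q]]] // _.
  by rewrite !schatten_pow2_1 expn0 mul1r; apply/ler_wsqrtr/(frob2_trunc_le trunc).
rewrite !schatten_pow2_2 expn1.
(* The S_4 estimate yields the factor 4^(1/4); the claimed 2 is 16^(1/4). *)
have two_E : (2 : R) = Num.sqrt (Num.sqrt 16).
  have -> : (16 : R) = (2 ^+ 2) ^+ 2 by rewrite -exprM -natrX.
  by rewrite sqrtr_sqr ger0_norm ?sqr_ge0 // sqrtr_sqr ger0_norm.
rewrite two_E -!sqrtrM ?sqrtr_ge0 //; apply/ler_wsqrtr/ler_wsqrtr.
apply: le_trans (frob2_gram_trunc_le trunc) _.
by rewrite ler_wpM2r ?frob2_ge0 //; lra.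
Qed.

Lemma inDb_opnorm_le1_0 n m nb :
  inDb nb (0 : 'M[R]_(n, m)) /\ opnorm_le1 (0 : 'M[R]_(n, m)).
Proof.
split=> [r j _|v]; first by rewrite mxE.
by rewrite mul0mx big1 ?sumr_ge0 // => i _; rewrite ?mxE ?expr0n ?sqr_ge0.
Qed.

Lemma has_sup_schatten_pow2 n m nb q (M : 'M[R]_n) : (1 <= q <= 2)%N ->
  has_sup [set y | exists X : 'M[R]_(n, m),
                   inDb nb X /\ opnorm_le1 X /\ y = schatten_pow2 q (M *m X)].
Proof.
move=> hq; have [Db0 le1_0] := inDb_opnorm_le1_0 n m nb.
split; first by exists (schatten_pow2 q (M *m 0 : 'M_(n, m))), 0.
exists (Num.sqrt (frob2 M * m%:R)) => _ [X [_ [X_le1 ->]]].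
apply: le_trans (schatten_pow2_le_frob _ hq) _; apply/ler_wsqrtr.
apply: le_trans (frob2_mulmx_le _ _) _.
by rewrite ler_wpM2l ?frob2_ge0 ?opnorm_le1_frob2.
Qed.

End Schatten.

Theorem mainTheorem10 (R : realType) (n m : nat) (nb : nat -> nat)
  (hb : block_structure n m nb) (q : nat) (hq : (1 <= q <= 2)%N)
  (M : 'M[R]_n) :
  bnorm m nb q (Ub m nb M) <= (2 ^ q.-1)%N%:R * bnorm m nb q M.
Proof.
have [Db0 le1_0] := inDb_opnorm_le1_0 R n m nb.
apply: ge_sup; first by exists (schatten_pow2 q (Ub m nb M *m 0 : 'M_(n, m))), 0.
move=> _ [X [X_Db [X_le1 ->]]].
apply: le_trans (schatten_pow2_Ub_mulmx_le M hb hq X_Db) _.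
rewrite ler_wpM2l ?ler0n //.
by apply: sup_upper_bound; [exact: has_sup_schatten_pow2 | exists X].
Qed.
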